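(* Fix an assignment $\gamma\mapsto\phi_\gamma$ of LTL formulas to actions such that each $\phi_\gamma$ models $\gamma$, and use the LTL verification scheme described in the context. Let $Z$ be a decision structure that satisfies a specification $\varphi$, let $v$ be a node of $Z$ labelled by the action $\alpha$, and let $r_1,\dots,r_m$ be the labels of the arcs out of $v$. Let $\beta$ be an action such that (i) $\phi_\beta\models\phi_\alpha$, and (ii) for every state $w$ and every $i\in\{1,\dots,m\}$, $\alpha_R(w)=r_i$ if and only if $\beta_R(w)=r_i$. Then the decision structure $Z'$ obtained from $Z$ by relabelling $v$ with $\beta$ also satisfies $\varphi$. Consequently, the predicate ''(i) and (ii) hold'' is a sufficient condition for actions for this scheme.
   Context: Fix sets $\mathbb{W}$ (states), $\mathbb{S}$ (signals), $\mathcal{R}$ (return values). An action is a pair $\alpha=(\alpha_B,\alpha_R)$ with $\alpha_B:\mathbb{W}\to\mathbb{S}$, $\alpha_R:\mathbb{W}\to\mathcal{R}$. A decision structure is a finite directed acyclic graph $Z=(N,A)$ with a unique source, an arc labelling $\ell:A\to\mathcal{R}$ and a node labelling $\eta$ by actions, such that distinct arcs leaving the same node have distinct labels; $Z(w)$ is computed by starting at the source and, at node $v$ with $\eta(v)=\alpha$, following the arc out of $v$ labelled $\alpha_R(w)$ if it exists and otherwise outputting $\alpha$. The world assigns to each state $w$ and signal $x$ a set $\mathrm{Succ}(w,x)$ of infinite state sequences; $w^\alpha:=\mathrm{Succ}(w,\alpha_B(w))$. LTL formulas over atomic state propositions (any subset $U\subseteq\mathbb{W}$ is an atomic proposition, true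 at a state iff the state lies in $U$; non-temporal formulas are evaluated at the first state of a sequence) are evaluated on infinite state sequences with standard semantics; $\phi\models\psi$ means every infinite state sequence satisfying $\phi$ satisfies $\psi$. $\phi$ models $\alpha$ if for every $w_1$ and every $(w_2,w_3,\dots)\in w_1^\alpha$, the sequence $w_1,w_2,\dots$ satisfies $\phi$. LTL verification scheme: for a decision structure $Z$, let $\Delta_Z$ be the finite set of actions labelling its nodes and $Z^{-1}(\gamma)=\{w: Z(w)=\gamma\}$; set $\Psi_Z:=\bigvee_{\gamma\in\Delta_Z}\big(Z^{-1}(\gamma)\wedge\phi_\gamma\big)$. $Z$ satisfies the specification $\varphi$ (an LTL formula) iff $\square\Psi_Z\models\varphi$. A predicate $C(Z,v,\alpha,\beta)$ is a sufficient condition for actions if whenever $Z$ satisfies $\varphi$ and $C(Z,v,\eta(v),\beta)$ holds, the structure obtained by relabelling $v$ with $\beta$ satisfies $\varphi$. *)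

From Stdlib Require Import Relations.
From mathcomp Require Import all_boot.
Set Implicit Arguments. Unset Strict Implicit. Unset Printing Implicit Defensive.

Section Defs.
Variables (W S R : Type).

Record action := Action { actB : W -> S; actR : W -> R }.

Inductive ltl :=
| LAtom of (W -> Prop)
| LTrue
| LNot of ltl
| LAnd of ltl & ltl
| LOr of ltl & ltl
| LNext of ltl
| LUntil of ltl & ltl
| LAlways of ltl
| LEventually of ltl.

Definition suffix (sigma : nat -> W) (k : nat) : nat -> W := fun n => sigma (k + n).

Fixpoint sat (sigma : nat -> W) (f : ltl) : Prop :=
  match f with
  | LAtom U => U (sigma 0)
  | LTrue => True
  | LNot g => ~ sat sigma g
  | LAnd g h => sat sigma g /\ sat sigma h
  | LOr g h => sat sigma g \/ sat sigma h
  | LNext g => sat (suffix sigma 1) g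
  | LUntil g h => exists k, sat (suffix sigma k) h /\
                    forall j, j < k -> sat (suffix sigma j) g
  | LAlways g => forall k, sat (suffix sigma k) g
  | LEventually g => exists k, sat (suffix sigma k) g
  end.

Definition entails (f g : ltl) : Prop := forall sigma, sat sigma f -> sat sigma g.

Definition scons (w : W) (sigma : nat -> W) : nat -> W :=
  fun n => match n with 0 => w | n'.+1 => sigma n' end.

Definition models (Succ : W -> S -> (nat -> W) -> Prop) (f : ltl) (a : action) : Prop :=
  forall w1 sigma, Succ w1 (actB a w1) sigma -> sat (scons w1 sigma) f.

Record dstruct := DStruct {
  dnode : finType;
  darc : finType;
  dsrc : darc -> dnode;
  dtgt : darc -> dnode;
  dlab : darc -> R;
  deta : dnode -> action;
  droot : dnode }.

Definition dedge (Z : dstruct) (u v : dnode Z) : Prop := exists a, dsrc a = u /\ dtgt a = v.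

Definition wf_dstruct (Z : dstruct) : Prop :=
  (forall v, ~ clos_trans (dnode Z) (@dedge Z) v v) /\
  (forall a : darc Z, dtgt a <> droot Z) /\
  (forall v, v <> droot Z -> exists a : darc Z, dtgt a = v) /\
  (forall a b : darc Z, dsrc a = dsrc b -> dlab a = dlab b -> a = b).

Inductive runs (Z : dstruct) (w : W) : dnode Z -> action -> Prop :=
| runs_stop v : (forall a, dsrc a = v -> dlab a <> actR (deta v) w) ->
    runs w v (deta v)
| runs_step v a g : dsrc a = v -> dlab a = actR (deta v) w ->
    runs w (dtgt a) g -> runs w v g.

Definition evalZ (Z : dstruct) (w : W) (g : action) : Prop := @runs Z w (droot Z) g.

(** Psi_Z := \/_{gamma in Delta_Z} (Z^{-1}(gamma) /\ phi_gamma),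
    Delta_Z being the labels of the nodes of Z. *)
Definition PsiZ (phi : action -> ltl) (Z : dstruct) : ltl :=
  foldr (fun v f => LOr (LAnd (LAtom (fun w => evalZ Z w (deta v))) (phi (deta v))) f)
        (LNot LTrue) (enum (dnode Z)).

Definition satisfies (phi : action -> ltl) (Z : dstruct) (spec : ltl) : Prop :=
  entails (LAlways (PsiZ phi Z)) spec.

Definition relabel (Z : dstruct) (v : dnode Z) (b : action) : dstruct :=
  @DStruct (dnode Z) (darc Z) (@dsrc Z) (@dtgt Z) (@dlab Z)
    (fun u => if u == v then b else deta u) (droot Z).

Definition sufficient_condition (phi : action -> ltl)
  (C : forall Z : dstruct, dnode Z -> action -> action -> Prop) : Prop :=
  forall (Z : dstruct) (v : dnode Z) (b : action) (spec : ltl),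
    wf_dstruct Z -> satisfies phi Z spec -> C Z v (deta v) b ->
    satisfies phi (relabel v b) spec.

Definition cond_i_ii (phi : action -> ltl) (Z : dstruct) (v : dnode Z)
  (a b : action) : Prop :=
  entails (phi b) (phi a) /\
  (forall (w : W) (e : darc Z), dsrc e = v ->
      (actR a w = dlab e <-> actR b w = dlab e)).

End Defs.

From mathcomp Require Import all_boot.

(* Relabelling a node v of Z by an action b that branches exactly
   like the old label on every arc out of v does not change the path that the
   computation of Z follows on any state: Z'(w) is the output of Z(w) itself
   when that output comes from a node other than v, and is b when it comes
   from v.  Hence, at every state, each disjunct  Z'^-1(g) /\ phi_g  of Psi_Z'
   is matched by a disjunct of Psi_Z, using phi_b |= phi_{eta v} for the node v.
   So Psi_Z' |= Psi_Z, thus []Psi_Z' |= []Psi_Z |= spec. *)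

Section Relabelling.
Context {W S R : Type}.

Local Notation action := (action W S R).
Local Notation ltl := (ltl W).
Local Notation dstruct := (dstruct W S R).

Lemma sat_big_or (T : eqType) (F : T -> ltl) (sigma : nat -> W) (l : seq T) :
  sat sigma (foldr (fun x f => LOr (F x) f) (LNot (LTrue W)) l) <->
  exists2 x, x \in l & sat sigma (F x).
Proof.
elim: l => [|x l IH] /=.
  by split=> [Hfalse | [x]//]; exfalso; apply: Hfalse.
split=> [[Hx | /IH [y Hy HFy]] | [y]].
- by exists x; rewrite ?mem_head.
- by exists y; rewrite // inE Hy orbT.
rewrite inE => /orP [/eqP -> | Hy] HFy; first by left.
by right; apply/IH; exists y.
Qed.

Lemma sat_PsiZ (phi : action -> ltl) (Z : dstruct) (sigma : nat -> W) :
  sat sigma (PsiZ phi Z) <->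
  exists u : dnode Z, evalZ Z (sigma 0) (deta u) /\ sat sigma (phi (deta u)).
Proof.
split=> [/sat_big_or [u _ Hu] | [u Hu]]; first by exists u.
by apply/sat_big_or; exists u; rewrite ?mem_enum.
Qed.

Section Runs.
Context {Z : dstruct} {v : dnode Z} {b : action} {w : W}.

Hypothesis same_branch : forall e : darc Z, dsrc e = v ->
  (actR (deta v) w = dlab e <-> actR b w = dlab e).

Lemma relabel_selects {u : dnode Z} {e : darc Z} : dsrc e = u ->
  dlab e = actR (deta (d := relabel v b) u) w <-> dlab e = actR (deta u) w.
Proof.
move=> He /=; case: eqP => [Euv | _] //; rewrite Euv in He *.
have [to_b to_a] := same_branch e He.
by split=> Hl; symmetry; [apply: to_a | apply: to_b]; rewrite Hl.
Qed.

Lemma runs_relabel {u : dnode Z} {g : action} :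
  runs (Z := relabel v b) w u g ->
  exists n : dnode Z, runs w u (deta n) /\
                      g = if n == v then b else deta n.
Proof.
elim=> {u g} [u Hstop | u e g He Hsel _ [n [Hrun Eg]]].
- exists u; split=> //; apply: runs_stop => e He Hsel.
  by apply: (Hstop e He); apply/(relabel_selects He).
- exists n; split=> //; apply: (@runs_step _ _ _ Z w u e _ He _ Hrun).
  exact/(relabel_selects He).
Qed.

End Runs.

Lemma PsiZ_relabel {phi : action -> ltl} {Z : dstruct} {v : dnode Z}
    {b : action} :
  entails (phi b) (phi (deta v)) ->
  (forall (w : W) (e : darc Z), dsrc e = v ->
     (actR (deta v) w = dlab e <-> actR b w = dlab e)) ->
  entails (PsiZ phi (relabel v b)) (PsiZ phi Z).
Proof.
move=> Hphi Hbranch sigma /sat_PsiZ [u [Heval Hsat]]; apply/sat_PsiZ.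
have [n [Hrun Eg]] := runs_relabel (Hbranch (sigma 0)) Heval.
exists n; split=> //; move: Hsat; rewrite Eg.
by case: eqP => [-> | _]; [apply: Hphi | ].
Qed.

Lemma entails_always {f g : ltl} :
  entails f g -> entails (LAlways f) (LAlways g).
Proof. by move=> Hfg sigma Hf k; apply: Hfg. Qed.

Lemma satisfies_relabel (phi : action -> ltl) (Z : dstruct) (spec : ltl)
    (v : dnode Z) (b : action) :
  satisfies phi Z spec ->
  entails (phi b) (phi (deta v)) ->
  (forall (w : W) (e : darc Z), dsrc e = v ->
     (actR (deta v) w = dlab e <-> actR b w = dlab e)) ->
  satisfies phi (relabel v b) spec.
Proof.
move=> HZ Hphi Hbranch sigma Hpsi; apply: HZ.
exact: (entails_always (PsiZ_relabel Hphi Hbranch)).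
Qed.

End Relabelling.

Theorem mainTheorem19 (W S R : Type) (Succ : W -> S -> (nat -> W) -> Prop)
  (phi : action W S R -> ltl W)
  (hphi : forall g : action W S R, models Succ (phi g) g) :
  (forall (Z : dstruct W S R) (spec : ltl W) (v : dnode Z) (b : action W S R),
     wf_dstruct Z ->
     satisfies phi Z spec ->
     entails (phi b) (phi (deta v)) ->
     (forall (w : W) (e : darc Z), dsrc e = v ->
        (actR (deta v) w = dlab e <-> actR b w = dlab e)) ->
     satisfies phi (relabel v b) spec)
  /\ sufficient_condition phi (@cond_i_ii W S R phi).
Proof.
split=> [Z spec v b _ | Z v b spec _ HZ [Hphi Hbranch]];
  exact: satisfies_relabel.
Qed.
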